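(* Let $D$ be a normalized 2-page book drawing of $K_n$ and $1\le i<j\le n$. Let $k$ be the number of entries of $M(D)$ to the right of $(i,j)$ having the same color as $(i,j)$ plus the number of entries above $(i,j)$ having the same color as $(i,j)$. Then exactly $k$ of the vertices other than $i,j$ lie on one side of the edge $ij$ (i.e., $ij$ is a $k$-edge, where possibly $k>\lfloor n/2\rfloor-1$).
   Context: Normalized 2-page book drawing of $K_n$: vertices $(1,0),\dots,(n,0)$ labelled $1,\dots,n$ left to right; edges $i(i+1)$ on the $x$-axis (spine); edge $1n$ in the upper half-plane; every other edge $ij$ a semicircle over $[i,j]$ in the upper or lower half-plane. Edges on the spine or in the upper half-plane are blue, in the lower half-plane red. $M(D)$ has entries $(i,j)$, $1\le i<j\le n$ (row $i$, column $j$), colored as edge $ij$; entries $(i',j)$ with $i'<i$ are above $(i,j)$, entries $(i,j')$ with $j'>j$ are to its right. For distinct vertices $p,q,r$, $r$ is on the left (right) of $\overrightarrow{pq}$ if the triangle with edges $pq,qr,rp$ traced in order $p,q,r$ is counterclockwise (clockwise); $pq$ is a $k$-edge if exactly $k$ of the other vertices lie on one side. *)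

From Stdlib Require Import Reals Lra Arith List.
From Coquelicot Require Import Coquelicot.
Open Scope R_scope.

(* A normalized 2-page book drawing of K_n is encoded by
   [up : nat -> nat -> bool]: for 1 <= i < j <= n with j <> i+1,
   [up i j = true] means the edge ij is the upper semicircle, [false] the
   lower one.  Edges i(i+1) lie on the spine regardless of [up]. *)

(* vertical direction of edge {a,b} (a < b): 1 upper, 0 spine, -1 lower *)
Definition edge_sign (up : nat -> nat -> bool) (a b : nat) : R :=
  if Nat.eqb b (S a) then 0 else if up a b then 1 else -1.

Definition sgn_pq (up : nat -> nat -> bool) (p q : nat) : R :=
  edge_sign up (Nat.min p q) (Nat.max p q).

(* Edge pq traced from vertex (p,0) to vertex (q,0), parametrized by
   theta in [0,PI]: the semicircle over [p,q] (or the spine segment when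
   sign = 0) with center m = (p+q)/2 and signed half-length rho = (q-p)/2. *)
Definition arc_x (p q : nat) (t : R) : R :=
  (INR p + INR q) / 2 - ((INR q - INR p) / 2) * cos t.
Definition arc_y (up : nat -> nat -> bool) (p q : nat) (t : R) : R :=
  sgn_pq up p q * Rabs ((INR q - INR p) / 2) * sin t.

(* contribution of the directed edge p -> q to  \oint (x dy - y dx) *)
Definition arc_green (up : nat -> nat -> bool) (p q : nat) : R :=
  RInt (fun t => arc_x p q t * Derive (arc_y up p q) t
                 - arc_y up p q t * Derive (arc_x p q) t) 0 PI.

(* signed area enclosed by the closed curve formed by the edges pq, qr, rp
   traced in order p, q, r (Green's formula); positive iff counterclockwise *)
Definition tri_area (up : nat -> nat -> bool) (p q r : nat) : R :=
  (arc_green up p q + arc_green up q r + arc_green up r p) / 2.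

(* r is on the left (right) of pq: triangle p,q,r counterclockwise (clockwise) *)
Definition leftb (up : nat -> nat -> bool) (p q r : nat) : bool :=
  if Rlt_dec 0 (tri_area up p q r) then true else false.
Definition rightb (up : nat -> nat -> bool) (p q r : nat) : bool :=
  if Rlt_dec (tri_area up p q r) 0 then true else false.

Definition others (n p q : nat) : list nat :=
  filter (fun r => andb (negb (Nat.eqb r p)) (negb (Nat.eqb r q))) (seq 1 n).

Definition is_k_edge (up : nat -> nat -> bool) (n k p q : nat) : Prop :=
  length (filter (leftb up p q) (others n p q)) = k \/
  length (filter (rightb up p q) (others n p q)) = k.

(* colour of edge ab (a<b) = colour of entry (a,b) of M(D): true = blue *)
Definition blue (up : nat -> nat -> bool) (a b : nat) : bool :=
  orb (Nat.eqb b (S a)) (up a b).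

Definition same_color_count (up : nat -> nat -> bool) (n i j : nat) : nat :=
  length (filter (fun j' => Bool.eqb (blue up i j') (blue up i j))
                 (seq (S j) (n - j)))
  + length (filter (fun i' => Bool.eqb (blue up i' j) (blue up i j))
                 (seq 1 (i - 1))).

(* By Green's formula each edge pq contributes a multiple of
   sgn(pq) (p - q) |p - q| to the signed area of a triangle, so for vertices
   p < q < r the orientation is decided by the longest edge pr alone: its
   term dominates, since (r - p)^2 > (q - p)^2 + (r - q)^2.  Hence a vertex r
   outside [i, j] lies on the side of ij given by the colour of the edge
   joining r to the far endpoint (the entry of M(D) to the right of or above
   (i, j)), while every vertex strictly between i and j lies on the side
   opposite to the colour of ij. *)
From Stdlib Require Import Reals Arith List Lra Lia Psatz.
From Coquelicot Require Import Coquelicot.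
Open Scope R_scope.

Lemma arc_green_closed_form up p q :
  arc_green up p q =
  PI / 4 * (sgn_pq up p q * (INR p - INR q) * Rabs (INR p - INR q)).
Proof.
  set (rho := (INR q - INR p) / 2).
  set (c := sgn_pq up p q * Rabs rho).
  set (m := (INR p + INR q) / 2).
  assert (Dy : forall t, Derive (arc_y up p q) t = c * cos t).
  { intro t; apply is_derive_unique; unfold arc_y; fold rho c.
    auto_derive; auto; ring. }
  assert (Dx : forall t, Derive (arc_x p q) t = rho * sin t).
  { intro t; apply is_derive_unique; unfold arc_x; fold rho m.
    auto_derive; auto; ring. }
  unfold arc_green.
  rewrite (RInt_ext _ (fun t => c * (m * cos t - rho))).
  2:{ intros t _; rewrite Dx, Dy; unfold arc_x, arc_y; fold rho c m.
      pose proof (sin2_cos2 t) as Pyth; unfold Rsqr in Pyth.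
      apply Rminus_diag_uniq.
      transitivity (- (c * rho) * (sin t * sin t + cos t * cos t - 1)).
      - ring.
      - rewrite Pyth; ring. }
  assert (Primitive : is_RInt (fun t => c * (m * cos t - rho)) 0 PI
    (c * (m * sin PI - rho * PI) - c * (m * sin 0 - rho * 0))).
  { apply (is_RInt_derive (fun t => c * (m * sin t - rho * t))).
    - intros t _; auto_derive; auto; ring.
    - intros t _; apply continuity_pt_filterlim, derivable_continuous_pt; reg. }
  rewrite (is_RInt_unique _ _ _ _ Primitive), sin_PI, sin_0.
  unfold c, rho.
  replace (INR q - INR p) with (- (INR p - INR q)) by ring.
  unfold Rdiv; rewrite Rabs_mult, Rabs_Ropp, (Rabs_right (/ 2)) by lra.
  field.
Qed.

Definition orient (up : nat -> nat -> bool) (p q r : nat) : R :=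
  sgn_pq up p q * (INR p - INR q) * Rabs (INR p - INR q)
  + sgn_pq up q r * (INR q - INR r) * Rabs (INR q - INR r)
  + sgn_pq up r p * (INR r - INR p) * Rabs (INR r - INR p).

Lemma tri_area_orient up p q r : tri_area up p q r = PI / 8 * orient up p q r.
Proof. unfold tri_area, orient; rewrite !arc_green_closed_form; field. Qed.

Lemma sgn_pq_comm up p q : sgn_pq up p q = sgn_pq up q p.
Proof. unfold sgn_pq; rewrite Nat.min_comm, Nat.max_comm; reflexivity. Qed.

Lemma orient_cycle up p q r : orient up p q r = orient up q r p.
Proof. unfold orient; ring. Qed.

Lemma orient_swap up p q r : orient up p r q = - orient up p q r.
Proof.
  unfold orient; rewrite (sgn_pq_comm up p r), (sgn_pq_comm up r q),
    (sgn_pq_comm up q p).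
  rewrite (Rabs_minus_sym (INR p) (INR r)), (Rabs_minus_sym (INR r) (INR q)),
    (Rabs_minus_sym (INR q) (INR p)).
  ring.
Qed.

Lemma edge_sign_bounds up a b : -1 <= edge_sign up a b <= 1.
Proof. unfold edge_sign; destruct (Nat.eqb b (S a)), (up a b); lra. Qed.

Lemma edge_sign_nonadj up a b :
  b <> S a -> edge_sign up a b = if up a b then 1 else -1.
Proof. intro Hb; unfold edge_sign; apply Nat.eqb_neq in Hb; rewrite Hb; reflexivity. Qed.

Lemma sum_of_bounded_squares_lt s t a b :
  0 < a -> 0 < b -> -1 <= s <= 1 -> -1 <= t <= 1 ->
  Rabs (s * (a * a) + t * (b * b)) < (a + b) * (a + b).
Proof. intros; apply Rabs_def1; nra. Qed.

Lemma orient_sorted_sign (up : nat -> nat -> bool) (p q r : nat) : (p < q < r)%nat ->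
  if up p r then 0 < orient up p q r else orient up p q r < 0.
Proof.
  intros [Hpq Hqr].
  assert (Spq : sgn_pq up p q = edge_sign up p q)
    by (unfold sgn_pq; rewrite Nat.min_l, Nat.max_r by lia; reflexivity).
  assert (Sqr : sgn_pq up q r = edge_sign up q r)
    by (unfold sgn_pq; rewrite Nat.min_l, Nat.max_r by lia; reflexivity).
  assert (Srp : sgn_pq up r p = if up p r then 1 else -1).
  { unfold sgn_pq; rewrite Nat.min_r, Nat.max_l by lia.
    apply edge_sign_nonadj; lia. }
  apply lt_INR in Hpq, Hqr.
  set (a := INR q - INR p); set (b := INR r - INR q).
  assert (Orient : orient up p q r =
    - (edge_sign up p q * (a * a) + edge_sign up q r * (b * b))
    + (if up p r then 1 else -1) * ((a + b) * (a + b))).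
  { unfold orient; rewrite Spq, Sqr, Srp.
    rewrite (Rabs_left (INR p - INR q)), (Rabs_left (INR q - INR r)),
      (Rabs_right (INR r - INR p)) by lra.
    unfold a, b; ring. }
  pose proof (sum_of_bounded_squares_lt (edge_sign up p q) (edge_sign up q r)
    a b ltac:(unfold a; lra) ltac:(unfold b; lra)
    (edge_sign_bounds up p q) (edge_sign_bounds up q r)) as Dom.
  apply Rabs_def2 in Dom.
  rewrite Orient; destruct (up p r); lra.
Qed.

Definition on_side (left : bool) (up : nat -> nat -> bool) (p q r : nat) : bool :=
  if left then leftb up p q r else rightb up p q r.

Lemma on_side_cycle c up p q r : on_side c up p q r = on_side c up q r p.
Proof.
  unfold on_side, leftb, rightb; rewrite !tri_area_orient, orient_cycle;
    reflexivity.
Qed.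

Lemma on_side_swap c up p q r : on_side c up p r q = on_side (negb c) up p q r.
Proof.
  unfold on_side, leftb, rightb; rewrite !tri_area_orient, orient_swap.
  pose proof PI_RGT_0.
  destruct c; simpl;
    destruct (Rlt_dec 0 (PI / 8 * - orient up p q r)),
             (Rlt_dec (PI / 8 * orient up p q r) 0),
             (Rlt_dec 0 (PI / 8 * orient up p q r)),
             (Rlt_dec (PI / 8 * - orient up p q r) 0);
    reflexivity || (exfalso; nra).
Qed.

Lemma on_side_sorted c up p q r : (p < q < r)%nat ->
  on_side c up p q r = Bool.eqb (up p r) c.
Proof.
  intro Hsorted; pose proof (orient_sorted_sign up p q r Hsorted) as Sign.
  pose proof PI_RGT_0.
  unfold on_side, leftb, rightb; rewrite tri_area_orient.
  destruct c, (up p r);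
    destruct (Rlt_dec 0 (PI / 8 * orient up p q r));
    destruct (Rlt_dec (PI / 8 * orient up p q r) 0);
    simpl; reflexivity || (exfalso; nra).
Qed.

Lemma blue_nonadj up a b : b <> S a -> blue up a b = up a b.
Proof. intro Hb; unfold blue; apply Nat.eqb_neq in Hb; rewrite Hb; reflexivity. Qed.

Lemma on_side_before c up i j r : (r < i < j)%nat ->
  on_side c up i j r = Bool.eqb (blue up r j) c.
Proof.
  intro H; rewrite <- on_side_cycle, on_side_sorted, blue_nonadj by lia;
    reflexivity.
Qed.

Lemma on_side_after c up i j r : (i < j < r)%nat ->
  on_side c up i j r = Bool.eqb (blue up i r) c.
Proof. intro H; rewrite on_side_sorted, blue_nonadj by lia; reflexivity. Qed.

Lemma on_side_between up i j r : (i < r < j)%nat ->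
  on_side (blue up i j) up i j r = false.
Proof.
  intro H; rewrite on_side_swap, on_side_sorted, blue_nonadj by lia.
  destruct (up i j); reflexivity.
Qed.

Lemma others_split n i j : (1 <= i < j)%nat -> (j <= n)%nat ->
  others n i j = seq 1 (i - 1) ++ seq (S i) (j - S i) ++ seq (S j) (n - j).
Proof.
  intros Hij Hjn; unfold others.
  replace n with ((i - 1) + S ((j - S i) + S (n - j)))%nat at 1 by lia.
  rewrite seq_app, <- cons_seq, seq_app, <- cons_seq.
  replace (1 + (i - 1))%nat with i by lia.
  replace (S i + (j - S i))%nat with j by lia.
  rewrite filter_app; cbn [filter]; rewrite Nat.eqb_refl; cbn [negb andb].
  rewrite filter_app; cbn [filter].
  rewrite Nat.eqb_refl, (proj2 (Nat.eqb_neq j i)) by lia; cbn [negb andb].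
  assert (Keep : forall m k, (i < m \/ m + k <= i)%nat -> (j < m \/ m + k <= j)%nat ->
    filter (fun r => andb (negb (r =? i)) (negb (r =? j)))%nat (seq m k) = seq m k).
  { intros m k Hi Hj; apply forallb_filter_id, forallb_forall.
    intros r Hr; apply in_seq in Hr.
    rewrite (proj2 (Nat.eqb_neq r i)), (proj2 (Nat.eqb_neq r j)) by lia;
      reflexivity. }
  rewrite !Keep by lia; reflexivity.
Qed.

Lemma on_side_count n up i j : (1 <= i < j)%nat -> (j <= n)%nat ->
  length (filter (on_side (blue up i j) up i j) (others n i j))
  = same_color_count up n i j.
Proof.
  intros Hij Hjn.
  rewrite others_split, !filter_app, !length_app by assumption.
  rewrite (filter_ext_in _ (fun _ => false) (seq (S i) (j - S i))), filter_false.
  2:{ intros r Hr; apply in_seq in Hr; apply on_side_between; lia. }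
  rewrite (filter_ext_in _ (fun r => Bool.eqb (blue up r j) (blue up i j)) (seq 1 (i - 1))).
  2:{ intros r Hr; apply in_seq in Hr; apply on_side_before; lia. }
  rewrite (filter_ext_in _ (fun r => Bool.eqb (blue up i r) (blue up i j)) (seq (S j) (n - j))).
  2:{ intros r Hr; apply in_seq in Hr; apply on_side_after; lia. }
  unfold same_color_count; simpl length; lia.
Qed.

Theorem lemma3 (n : nat) (up : nat -> nat -> bool) :
  up 1%nat n = true ->
  forall i j : nat, (1 <= i)%nat -> (i < j)%nat -> (j <= n)%nat ->
  is_k_edge up n (same_color_count up n i j) i j.
Proof.
  intros _ i j Hi Hij Hjn.
  pose proof (on_side_count n up i j (conj Hi Hij) Hjn) as Count.
  unfold is_k_edge; destruct (blue up i j); [left | right]; exact Count.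
Qed.
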